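(* Let $n,k$ be integers with $2\le 2k\le n-4$. Let $\eta=(\eta_1<\dots<\eta_l)\in\overline{\mathbb{D}}^{\,\mathrm{o}}_{2k+2}$, where $\overline{\mathbb{D}}^{\,\mathrm{o}}_{2k+2}=\mathbb{D}^{\,\mathrm{o}}_{2k+2}\setminus\{(1,2k+1)\}$ if $2k=n-4$ and $\overline{\mathbb{D}}^{\,\mathrm{o}}_{2k+2}=\mathbb{D}^{\,\mathrm{o}}_{2k+2}$ otherwise. Let $Y_{\eta^*}$ be the Young diagram whose main diagonal consists of exactly the cells $c_{1,1},\dots,c_{l+1,l+1}$ and which satisfies $h_{1,1}=2n-5$, $h_{i,i}=\eta_{l-(i-2)}$ for $2\le i\le l+1$, and $a(c_{i,i})=l(c_{i,i})$ for $1\le i\le l+1$. Let $\lambda$ be the partition whose parts are the hook lengths of the first-column cells of $Y_{\eta^*}$. Then: (1) $\lambda$ has exactly $n-2$ parts; (2) its largest part is $\lambda_{n-2}=2n-5$; (3) $\#\mathcal{M}_\lambda=n-3$.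
   Context: $\mathbb{D}^{\,\mathrm{o}}_N$ is the set of partitions of $N$ into distinct odd parts, i.e. sequences $(\eta_1<\dots<\eta_l)$ of odd positive integers with sum $N$ and $l\ge 2$. For a partition $\lambda=(\lambda_1<\dots<\lambda_t)$ into distinct parts, $\mathcal{M}_\lambda=\{1,\dots,\lambda_t\}\setminus\{\lambda_1,\dots,\lambda_t\}$. Young diagrams are in English convention: rows top to bottom, columns left to right, $c_{i,j}$ the cell in row $i$, column $j$; arm $a(c_{i,j})$ = number of cells to its right in its row, leg $l(c_{i,j})$ = number of cells below it in its column, hook length $h_{i,j}=a+l+1$. *)

From mathcomp Require Import all_boot.
Set Implicit Arguments. Unset Strict Implicit. Unset Printing Implicit Defensive.

(* A Young diagram (English convention) is given by its sequence of row
   lengths Y = [:: r_1; r_2; ...], nonincreasing, all positive.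
   Rows and columns are 1-indexed: cell c_{i,j} is in Y iff
   1 <= i <= #rows and 1 <= j <= r_i. *)
Definition is_young (Y : seq nat) : bool :=
  sorted geq Y && all (fun r => 0 < r) Y.

Definition row_len (Y : seq nat) (i : nat) : nat := nth 0 Y i.-1.

Definition in_diagram (Y : seq nat) (i j : nat) : bool :=
  (1 <= i <= size Y) && (1 <= j <= row_len Y i).

Definition arm (Y : seq nat) (i j : nat) : nat := row_len Y i - j.
Definition leg (Y : seq nat) (i j : nat) : nat := count (fun r => j <= r) (drop i Y).
Definition hook (Y : seq nat) (i j : nat) : nat := arm Y i j + leg Y i j + 1.

Definition first_col_hooks (Y : seq nat) : seq nat :=
  [seq hook Y i 1 | i <- iota 1 (size Y)].

Definition hook_partition (Y : seq nat) : seq nat := sort leq (first_col_hooks Y).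

Definition missing (lam : seq nat) : seq nat :=
  [seq m <- iota 1 (last 0 lam) | m \notin lam].

Definition distinct_odd_partition (N : nat) (eta : seq nat) : bool :=
  [&& sorted ltn eta, all odd eta, sumn eta == N & 2 <= size eta].

(* The first-column hooks of a Young diagram with t rows are strictly
   decreasing from top to bottom, since the row lengths weakly decrease while
   the legs drop by one, so they form t distinct positive numbers bounded by
   h_{1,1}.  A balanced corner a(c_{1,1}) = l(c_{1,1}) = t - 1 gives
   h_{1,1} = 2t - 1, so h_{1,1} = 2n - 5 forces t = n - 2, and the hooks miss
   exactly (2n - 5) - (n - 2) = n - 3 numbers below the largest one.  Neither
   eta nor the other diagonal cells play any role. *)
From mathcomp Require Import all_boot.
From mathcomp Require Import zify.

Set Implicit Arguments.
Unset Strict Implicit.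
Unset Printing Implicit Defensive.

Lemma sorted_leq_last (s : seq nat) x : sorted leq s -> x \in s -> x <= last 0 s.
Proof.
move=> s_sorted xs; have s_gt0 : 0 < size s by case: s xs {s_sorted}.
rewrite -(nth_index 0 xs) -nth_last.
have ix : index x s < size s by rewrite index_mem.
by apply: (sorted_leq_nth leq_trans leqnn); rewrite ?inE ?prednK //; lia.
Qed.

Lemma size_missing (lam : seq nat) :
  sorted ltn lam -> 0 \notin lam -> size (missing lam) = last 0 lam - size lam.
Proof.
rewrite ltn_sorted_uniq_leq => /andP[lam_uniq lam_sorted] lam_gt0.
set L := last 0 lam.
have lam_range : {subset lam <= iota 1 L}.
  move=> x xlam; have x_gt0 : x != 0 by apply: contraNneq lam_gt0 => <-.
  by rewrite mem_iota; have := sorted_leq_last lam_sorted xlam; lia.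
have count_lam : count (mem lam) (iota 1 L) = size lam.
  rewrite -size_filter; apply/perm_size/uniq_perm => //.
    exact/filter_uniq/iota_uniq.
  by move=> x; rewrite mem_filter andb_idr //; apply: lam_range.
rewrite /missing size_filter -[L in RHS](size_iota 1) -(count_predC (mem lam)).
by rewrite count_lam addKn.
Qed.

Section FirstColumnHooks.

Variable Y : seq nat.
Hypothesis Y_young : is_young Y.

Lemma row_len_gt0 i : i < size Y -> 0 < nth 0 Y i.
Proof. by case/andP: Y_young => _ /allP Y_gt0 iY; apply/Y_gt0/mem_nth. Qed.

Lemma leg_first_col i : leg Y i 1 = size Y - i.
Proof.
case/andP: Y_young => _ /allP Y_gt0.
rewrite /leg -size_drop -count_predT; apply: eq_in_count => r /mem_drop.
exact: Y_gt0.
Qed.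

Lemma hook_first_col i : i < size Y -> hook Y i.+1 1 = nth 0 Y i + (size Y - i.+1).
Proof.
move=> iY; have := row_len_gt0 iY.
by rewrite /hook leg_first_col /arm /row_len /=; lia.
Qed.

Lemma hook_corner_balanced :
  0 < size Y -> arm Y 1 1 = leg Y 1 1 -> hook Y 1 1 = (size Y).*2.-1.
Proof. by move=> Y_gt0; rewrite /hook => ->; rewrite leg_first_col; lia. Qed.

Lemma size_first_col_hooks : size (first_col_hooks Y) = size Y.
Proof. by rewrite size_map size_iota. Qed.

Lemma nth_first_col_hooks i :
  i < size Y -> nth 0 (first_col_hooks Y) i = hook Y i.+1 1.
Proof. by move=> iY; rewrite (nth_map 0) ?size_iota // nth_iota // add1n. Qed.

Lemma first_col_hooks_decreasing : sorted gtn (first_col_hooks Y).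
Proof.
apply/(sortedP 0) => i; rewrite size_first_col_hooks => iY; have iY' := ltnW iY.
rewrite !nth_first_col_hooks // !hook_first_col //.
have : nth 0 Y i.+1 <= nth 0 Y i.
  by case/andP: Y_young => /(sortedP 0) Y_sorted _; apply: Y_sorted.
lia.
Qed.

Lemma hook_partitionE : hook_partition Y = rev (first_col_hooks Y).
Proof.
have rev_sorted_ltn : sorted ltn (rev (first_col_hooks Y)).
  by rewrite rev_sorted; apply: first_col_hooks_decreasing.
rewrite /hook_partition; apply: (sorted_eq leq_trans anti_leq).
- by apply: sort_sorted; exact: leq_total.
- by apply: sub_sorted rev_sorted_ltn => x y /ltnW.
- by rewrite perm_sort perm_sym perm_rev.
Qed.

Lemma hook_partition_increasing : sorted ltn (hook_partition Y).
Proof. by rewrite hook_partitionE rev_sorted; apply: first_col_hooks_decreasing. Qed.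

Lemma size_hook_partition : size (hook_partition Y) = size Y.
Proof. by rewrite hook_partitionE size_rev size_first_col_hooks. Qed.

Lemma hook_partition_gt0 : 0 \notin hook_partition Y.
Proof.
by rewrite hook_partitionE mem_rev; apply/mapP=> -[i _]; rewrite /hook addn1.
Qed.

Lemma last_hook_partition : 0 < size Y -> last 0 (hook_partition Y) = hook Y 1 1.
Proof.
rewrite hook_partitionE /first_col_hooks.
by case: (size Y) => // t _; rewrite rev_cons last_rcons.
Qed.

End FirstColumnHooks.

Theorem corollary4p9 (n k : nat) (eta Y : seq nat) :
  2 <= 2 * k -> 2 * k <= n - 4 ->
  distinct_odd_partition (2 * k + 2) eta ->
  (2 * k = n - 4 -> eta <> [:: 1; 2 * k + 1]) ->
  is_young Y ->
  (forall i, 1 <= i -> in_diagram Y i i = (i <= size eta + 1)) ->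
  hook Y 1 1 = 2 * n - 5 ->
  (forall i, 2 <= i <= size eta + 1 -> hook Y i i = nth 0 eta (size eta + 1 - i)) ->
  (forall i, 1 <= i <= size eta + 1 -> arm Y i i = leg Y i i) ->
  let lam := hook_partition Y in
  [/\ size lam = n - 2,
      nth 0 lam (n - 3) = 2 * n - 5
    & size (missing lam) = n - 3].
Proof.
move=> k_gt0 kn _ _ Y_young diagY hook11 _ balanced lam.
have Y_gt0 : 0 < size Y.
  by have := diagY 1 isT; rewrite /in_diagram addn1 ltnS leq0n => /andP[/andP[]].
have sizeY : size Y = n - 2.
  have := hook_corner_balanced Y_young Y_gt0 (balanced 1 _).
  by rewrite addn1 ltnS leq0n hook11 => /(_ isT); lia.
have size_lam : size lam = n - 2 by rewrite size_hook_partition.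
have last_lam : last 0 lam = 2 * n - 5 by rewrite last_hook_partition.
split=> //.
  by rewrite -last_lam -nth_last size_lam; congr nth; lia.
rewrite size_missing ?hook_partition_increasing ?hook_partition_gt0 //.
by rewrite last_lam size_lam; lia.
Qed.
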